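(* Let $\beta=\beta(s)$ be a unit speed semi-real quaternionic curve in $\mathcal{Q}_v$ with non-zero curvatures $\kappa(s)$, $k(s)$ and $(r-\varepsilon_t\varepsilon_T\varepsilon_{N_1}\kappa)(s)$. Then $\beta$ is congruent to a semi-real quaternionic rectifying curve if and only if, for some $c\in\mathbb{R}$, $$\varepsilon_t\varepsilon_{n_1}\varepsilon_{N_1}\frac{\kappa(s)(r-\varepsilon_t\varepsilon_T\varepsilon_{N_1}\kappa)(s)\,(s+c)}{k(s)}+\varepsilon_t\varepsilon_{n_2}\varepsilon_{N_1}\left[\frac{\kappa(s)k(s)+(s+c)[\kappa'(s)k(s)-\kappa(s)k'(s)]}{k^2(s)(r-\varepsilon_t\varepsilon_T\varepsilon_{N_1}\kappa)(s)}\right]'=0.$$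
   Context: $\mathcal{Q}_v$ denotes the semi-real quaternions, identified with the semi-Euclidean space $\mathbb{R}^4_2$ with inner product $h(p,q)=p_1q_1+p_2q_2-p_3q_3-p_4q_4$. A semi-real quaternionic curve $\beta:I\to\mathcal{Q}_v$ is unit speed (pseudo arc length $s$) if $T=\beta'$ satisfies $h(T,T)=\varepsilon_T=\pm1$. Its non-null Serret–Frenet frame $\{T,N_1,N_2,N_3\}$ satisfies $T'=\varepsilon_{N_1}\kappa N_1$, $N_1'=-\varepsilon_t\varepsilon_{N_1}\kappa T+\varepsilon_{n_1}kN_2$, $N_2'=-\varepsilon_t kN_1+\varepsilon_{n_1}(r-\varepsilon_t\varepsilon_T\varepsilon_{N_1}\kappa)N_3$, $N_3'=-\varepsilon_{n_2}(r-\varepsilon_t\varepsilon_T\varepsilon_{N_1}\kappa)N_2$, where $\kappa=\varepsilon_{N_1}\|T'\|$ is the principal curvature of $\beta$; $k$ and $r$ are the principal curvature and torsion of the associated semi-real spatial quaternionic curve $\alpha$ in $\mathbb{R}^3_1$ whose Frenet frame $\{\mathbf{t},\mathbf{n}_1,\mathbf{n}_2\}$ has signs $h(\mathbf{t},\mathbf{t})=\varepsilon_t$, $h(\mathbf{n}_1,\mathbf{n}_1)=\varepsilon_{n_1}$, $h(\mathbf{n}_2,\mathbf{n}_2)=\varepsilon_{n_2}$, related to $\beta$'s frame by $N_1=\varepsilon_T(\mathbf{t}\times T)$, $N_2=\varepsilon_T(\mathbf{n}_1\times T)$, $N_3=\varepsilon_T(\mathbf{n}_2\times T)$ ($\times$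 the semi-real quaternion product); moreover $h(N_1,N_1)=\varepsilon_{N_1}$, $h(N_2,N_2)=\varepsilon_{n_1}\varepsilon_T$, $h(N_3,N_3)=\varepsilon_{n_2}\varepsilon_T$. Thus $k$ is the torsion and $r-\varepsilon_t\varepsilon_T\varepsilon_{N_1}\kappa$ the bitorsion of $\beta$. $\beta$ is a semi-real quaternionic rectifying curve if $\beta(s)=\lambda(s)T(s)+\mu(s)N_2(s)+\nu(s)N_3(s)$ for some differentiable functions $\lambda,\mu,\nu$; congruent means equal up to a rigid motion (here a translation). *)

From Stdlib Require Import Reals.
From Coquelicot Require Import Coquelicot.
Open Scope R_scope.

(* Semi-real quaternions Q_v, identified with the semi-Euclidean space R^4_2. *)
Record quat := Quat { q1 : R; q2 : R; q3 : R; q4 : R }.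

Definition qadd (p q : quat) : quat :=
  Quat (q1 p + q1 q) (q2 p + q2 q) (q3 p + q3 q) (q4 p + q4 q).

Definition qscale (a : R) (p : quat) : quat :=
  Quat (a * q1 p) (a * q2 p) (a * q3 p) (a * q4 p).

Definition h (p q : quat) : R :=
  q1 p * q1 q + q2 p * q2 q - q3 p * q3 q - q4 p * q4 q.

Definition is_qderive (f : R -> quat) (s : R) (v : quat) : Prop :=
  is_derive (fun u => q1 (f u)) s (q1 v) /\
  is_derive (fun u => q2 (f u)) s (q2 v) /\
  is_derive (fun u => q3 (f u)) s (q3 v) /\
  is_derive (fun u => q4 (f u)) s (q4 v).

Definition is_sign (e : R) : Prop := e = 1 \/ e = -1.

Definition is_interval (I : R -> Prop) : Prop :=
  forall x y z, I x -> I z -> x <= y <= z -> I y.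

Definition smooth_on (I : R -> Prop) (f : R -> R) : Prop :=
  forall (n : nat) (s : R), I s -> ex_derive_n f n s.

Definition bitorsion (et eT eN1 : R) (kappa r : R -> R) (s : R) : R :=
  r s - et * eT * eN1 * kappa s.

(* beta : I -> Q_v is a unit speed (pseudo arc length) semi-real quaternionic
   curve with non-null Serret--Frenet frame {T,N1,N2,N3}, principal curvature
   kappa, and k, r the principal curvature and torsion of the associated
   spatial quaternionic curve whose frame has causal characters et, en1, en2. *)
Definition serret_frenet (I : R -> Prop) (beta T N1 N2 N3 : R -> quat)
    (kappa k r : R -> R) (eT eN1 et en1 en2 : R) : Prop :=
  let rho := bitorsion et eT eN1 kappa r in
  is_sign eT /\ is_sign eN1 /\ is_sign et /\ is_sign en1 /\ is_sign en2 /\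
  smooth_on I kappa /\ smooth_on I k /\ smooth_on I r /\
  forall s, I s ->
    is_qderive beta s (T s) /\
    h (T s) (T s) = eT /\ h (N1 s) (N1 s) = eN1 /\
    h (N2 s) (N2 s) = en1 * eT /\ h (N3 s) (N3 s) = en2 * eT /\
    h (T s) (N1 s) = 0 /\ h (T s) (N2 s) = 0 /\ h (T s) (N3 s) = 0 /\
    h (N1 s) (N2 s) = 0 /\ h (N1 s) (N3 s) = 0 /\ h (N2 s) (N3 s) = 0 /\
    is_qderive T s (qscale (eN1 * kappa s) (N1 s)) /\
    is_qderive N1 s (qadd (qscale (- (et * eN1 * kappa s)) (T s))
                          (qscale (en1 * k s) (N2 s))) /\
    is_qderive N2 s (qadd (qscale (- (et * k s)) (N1 s))
                          (qscale (en1 * rho s) (N3 s))) /\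
    is_qderive N3 s (qscale (- (en2 * rho s)) (N2 s)).

Definition rectifying (I : R -> Prop) (gamma T N2 N3 : R -> quat) : Prop :=
  exists lam mu nu : R -> R,
    forall s, I s ->
      ex_derive lam s /\ ex_derive mu s /\ ex_derive nu s /\
      gamma s = qadd (qscale (lam s) (T s))
                     (qadd (qscale (mu s) (N2 s)) (qscale (nu s) (N3 s))).

(* beta is congruent (up to a translation, which leaves the Serret--Frenet
   frame unchanged) to a rectifying curve. *)
Definition congruent_to_rectifying (I : R -> Prop) (beta T N2 N3 : R -> quat)
  : Prop :=
  exists m : quat, rectifying I (fun s => qadd (beta s) m) T N2 N3.

(* Write beta + m = lam T + mu N2 + nu N3 and let rho be the bitorsion. By the
   Serret-Frenet equations the frame coordinates of (lam T + mu N2 + nu N3)' are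
     (lam',  lam eN1 kappa - mu et k,  mu' - nu en2 rho,  mu en1 rho + nu'),
   and these are (1, 0, 0, 0) exactly when the curve has derivative T = beta'.
   The first three equations force lam = s + c, mu = et eN1 kappa (s + c) / k and
   nu = en2 et eN1 (kappa (s + c) / k)' / rho, after which the fourth one is the
   stated condition. Conversely, for these lam, mu, nu the condition makes
   lam T + mu N2 + nu N3 a curve with derivative T, hence a translate of beta. *)

From Stdlib Require Import Reals Lra Classical.
From Coquelicot Require Import Coquelicot.
Open Scope R_scope.

Definition qcomb4 (a b c d : R) (X Y Z W : quat) : quat :=
  qadd (qscale a X) (qadd (qscale b Y) (qadd (qscale c Z) (qscale d W))).

Lemma quat_eta (q : quat) : q = Quat (q1 q) (q2 q) (q3 q) (q4 q).
Proof. now destruct q. Qed.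

Lemma h_sym p q : h p q = h q p.
Proof. unfold h; ring. Qed.

Lemma h_qcomb4r a b c d X Y Z W V :
  h V (qcomb4 a b c d X Y Z W) = a * h V X + b * h V Y + c * h V Z + d * h V W.
Proof. unfold h, qcomb4, qadd, qscale; simpl; ring. Qed.

Lemma qcomb4_1000 X Y Z W : qcomb4 1 0 0 0 X Y Z W = X.
Proof. destruct X; unfold qcomb4, qadd, qscale; simpl; f_equal; ring. Qed.

Lemma sign_neq0 e : is_sign e -> e <> 0.
Proof. intros [-> | ->]; lra. Qed.

Lemma smooth_on_ex_derive2 (I : R -> Prop) f s : smooth_on I f -> I s ->
  ex_derive f s /\ ex_derive (Derive f) s.
Proof. intros Hf Hs; exact (conj (Hf 1%nat s Hs) (Hf 2%nat s Hs)). Qed.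

Lemma Derive_ext_on_open (I : R -> Prop) (f g : R -> R) s : open I -> I s ->
  (forall t, I t -> f t = g t) -> Derive f s = Derive g s.
Proof.
  intros HIo Hs E; apply Derive_ext_loc.
  apply (filter_imp I); [exact E | exact (HIo s Hs)].
Qed.

Lemma same_derive_on_interval (I : R -> Prop) (f g df : R -> R) : is_interval I ->
  (forall s, I s -> is_derive f s (df s)) -> (forall s, I s -> is_derive g s (df s)) ->
  forall a b, I a -> I b -> g a - f a = g b - f b.
Proof.
  intros HI Hf Hg a b Ha Hb.
  assert (Hab : forall x, Rmin a b <= x <= Rmax a b -> I x).
  { intros x Hx; unfold Rmin, Rmax in Hx; destruct (Rle_dec a b).
    - exact (HI a x b Ha Hb Hx).
    - exact (HI b x a Hb Ha Hx). }
  assert (Hd : forall x, I x -> is_derive (fun u => g u - f u) x 0).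
  { intros x Hx; replace 0 with (df x - df x) by ring.
    exact (is_derive_minus _ _ _ _ _ (Hg x Hx) (Hf x Hx)). }
  destruct (MVT_gen (fun u => g u - f u) a b (fun _ => 0)) as (x & _ & Hx).
  - intros x Hx; apply Hd, Hab; lra.
  - intros x Hx; apply continuity_pt_filterlim.
    apply (ex_derive_continuous (fun u => g u - f u)).
    exists 0; apply Hd, Hab, Hx.
  - lra.
Qed.

Lemma is_qderive_ext_on (I : R -> Prop) f g s v : open I -> I s ->
  (forall t, I t -> f t = g t) -> is_qderive f s v -> is_qderive g s v.
Proof.
  intros HIo Hs E.
  assert (L : forall q : quat -> R, locally s (fun t => q (f t) = q (g t))).
  { intro q; apply (filter_imp I); [intros t Ht; now rewrite E | exact (HIo s Hs)]. }
  intros (D1 & D2 & D3 & D4); split; [| split; [| split]].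
  - exact (is_derive_ext_loc _ (fun u => q1 (g u)) s _ (L q1) D1).
  - exact (is_derive_ext_loc _ (fun u => q2 (g u)) s _ (L q2) D2).
  - exact (is_derive_ext_loc _ (fun u => q3 (g u)) s _ (L q3) D3).
  - exact (is_derive_ext_loc _ (fun u => q4 (g u)) s _ (L q4) D4).
Qed.

Lemma is_qderive_unique f s v w : is_qderive f s v -> is_qderive f s w -> v = w.
Proof.
  intros (V1 & V2 & V3 & V4) (W1 & W2 & W3 & W4).
  apply is_derive_unique in V1, V2, V3, V4, W1, W2, W3, W4.
  rewrite (quat_eta v), (quat_eta w); f_equal; congruence.
Qed.

Lemma is_qderive_eq f s v w : is_qderive f s v -> v = w -> is_qderive f s w.
Proof. now intros D <-. Qed.

Lemma is_qderive_qadd f g s a b : is_qderive f s a -> is_qderive g s b ->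
  is_qderive (fun u => qadd (f u) (g u)) s (qadd a b).
Proof.
  intros (A1 & A2 & A3 & A4) (B1 & B2 & B3 & B4);
    split; [| split; [| split]].
  - exact (is_derive_plus (fun u => q1 (f u)) (fun u => q1 (g u)) s _ _ A1 B1).
  - exact (is_derive_plus (fun u => q2 (f u)) (fun u => q2 (g u)) s _ _ A2 B2).
  - exact (is_derive_plus (fun u => q3 (f u)) (fun u => q3 (g u)) s _ _ A3 B3).
  - exact (is_derive_plus (fun u => q4 (f u)) (fun u => q4 (g u)) s _ _ A4 B4).
Qed.

Lemma is_qderive_qscale (lam : R -> R) f s l a : is_derive lam s l -> is_qderive f s a ->
  is_qderive (fun u => qscale (lam u) (f u)) s (qadd (qscale l (f s)) (qscale (lam s) a)).
Proof.
  intros L (A1 & A2 & A3 & A4); split; [| split; [| split]].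
  - exact (is_derive_mult lam (fun u => q1 (f u)) s _ _ L A1 Rmult_comm).
  - exact (is_derive_mult lam (fun u => q2 (f u)) s _ _ L A2 Rmult_comm).
  - exact (is_derive_mult lam (fun u => q3 (f u)) s _ _ L A3 Rmult_comm).
  - exact (is_derive_mult lam (fun u => q4 (f u)) s _ _ L A4 Rmult_comm).
Qed.

Lemma is_qderive_qadd_const f m s v : is_qderive f s v ->
  is_qderive (fun u => qadd (f u) m) s v.
Proof.
  intros (A1 & A2 & A3 & A4); split; [| split; [| split]].
  - rewrite <- (Rplus_0_r (q1 v)); exact (is_derive_plus _ _ s _ _ A1 (is_derive_const (q1 m) s)).
  - rewrite <- (Rplus_0_r (q2 v)); exact (is_derive_plus _ _ s _ _ A2 (is_derive_const (q2 m) s)).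
  - rewrite <- (Rplus_0_r (q3 v)); exact (is_derive_plus _ _ s _ _ A3 (is_derive_const (q3 m) s)).
  - rewrite <- (Rplus_0_r (q4 v)); exact (is_derive_plus _ _ s _ _ A4 (is_derive_const (q4 m) s)).
Qed.

Lemma same_qderive_on_interval (I : R -> Prop) (f g v : R -> quat) : is_interval I ->
  (forall s, I s -> is_qderive f s (v s)) -> (forall s, I s -> is_qderive g s (v s)) ->
  exists m, forall s, I s -> qadd (f s) m = g s.
Proof.
  intros HI Hf Hg.
  destruct (classic (exists s0, I s0)) as [[s0 Hs0] | Hempty].
  2: { exists (Quat 0 0 0 0); intros s Hs; exfalso; eauto. }
  exists (Quat (q1 (g s0) - q1 (f s0)) (q2 (g s0) - q2 (f s0))
               (q3 (g s0) - q3 (f s0)) (q4 (g s0) - q4 (f s0))).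
  intros s Hs.
  assert (C : forall q : quat -> R,
             (forall t, I t -> is_derive (fun u => q (f u)) t (q (v t))) ->
             (forall t, I t -> is_derive (fun u => q (g u)) t (q (v t))) ->
             q (g s) - q (f s) = q (g s0) - q (f s0))
    by (intros q Df Dg; exact (same_derive_on_interval I _ _ _ HI Df Dg s s0 Hs Hs0)).
  rewrite (quat_eta (g s)); unfold qadd; simpl; f_equal.
  - specialize (C q1 (fun t Ht => proj1 (Hf t Ht)) (fun t Ht => proj1 (Hg t Ht))); lra.
  - specialize (C q2 (fun t Ht => proj1 (proj2 (Hf t Ht)))
                     (fun t Ht => proj1 (proj2 (Hg t Ht)))); lra.
  - specialize (C q3 (fun t Ht => proj1 (proj2 (proj2 (Hf t Ht))))
                     (fun t Ht => proj1 (proj2 (proj2 (Hg t Ht))))); lra.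
  - specialize (C q4 (fun t Ht => proj2 (proj2 (proj2 (Hf t Ht))))
                     (fun t Ht => proj2 (proj2 (proj2 (Hg t Ht))))); lra.
Qed.

Section RectifyingCriterion.

Variables (I : R -> Prop) (beta T N1 N2 N3 : R -> quat) (kappa k r : R -> R)
  (eT eN1 et en1 en2 : R).
Hypothesis HIo : open I.
Hypothesis HIi : is_interval I.
Hypothesis Hsf : serret_frenet I beta T N1 N2 N3 kappa k r eT eN1 et en1 en2.
Hypothesis Hnz : forall s, I s ->
  kappa s <> 0 /\ k s <> 0 /\ bitorsion et eT eN1 kappa r s <> 0.

Local Notation rho := (bitorsion et eT eN1 kappa r).
Local Notation frame_comb a b c d s := (qcomb4 a b c d (T s) (N1 s) (N2 s) (N3 s)).

Definition rect_comb (lam mu nu : R -> R) (s : R) : quat :=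
  qadd (qscale (lam s) (T s)) (qadd (qscale (mu s) (N2 s)) (qscale (nu s) (N3 s))).

Lemma beta_tangent s : I s -> is_qderive beta s (T s).
Proof. intro Hs; destruct Hsf as (_ & _ & _ & _ & _ & _ & _ & _ & Hf); apply (Hf s Hs). Qed.

Lemma is_qderive_rect_comb (lam mu nu : R -> R) s : I s ->
  ex_derive lam s -> ex_derive mu s -> ex_derive nu s ->
  is_qderive (rect_comb lam mu nu) s
    (frame_comb (Derive lam s) (lam s * (eN1 * kappa s) - mu s * (et * k s))
       (Derive mu s - nu s * (en2 * rho s)) (mu s * (en1 * rho s) + Derive nu s) s).
Proof.
  intros Hs Hl Hm Hn.
  destruct Hsf as (_ & _ & _ & _ & _ & _ & _ & _ & Hf).
  destruct (Hf s Hs) as (_ & _ & _ & _ & _ & _ & _ & _ & _ & _ & _ & DT & _ & DN2 & DN3).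
  eapply is_qderive_eq.
  - apply is_qderive_qadd; [| apply is_qderive_qadd];
      apply is_qderive_qscale; try apply Derive_correct; eassumption.
  - unfold qcomb4, qadd, qscale; simpl; f_equal; ring.
Qed.

Lemma frame_comb_eq_T a b c d s : I s ->
  frame_comb a b c d s = T s -> a = 1 /\ b = 0 /\ c = 0 /\ d = 0.
Proof.
  intros Hs E.
  destruct Hsf as (HeT & HeN1 & _ & Hen1 & Hen2 & _ & _ & _ & Hf).
  destruct (Hf s Hs) as (_ & HT & HN1 & HN2 & HN3 & oT1 & oT2 & oT3 & o12 & o13 & o23 & _).
  assert (Coord : forall V, h V (frame_comb a b c d s) = h V (T s)) by (intro V; now rewrite E).
  pose proof (Coord (T s)) as ET; pose proof (Coord (N1 s)) as E1.
  pose proof (Coord (N2 s)) as E2; pose proof (Coord (N3 s)) as E3.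
  rewrite h_qcomb4r in ET, E1, E2, E3.
  rewrite (h_sym (N1 s) (T s)) in E1; rewrite (h_sym (N2 s) (T s)), (h_sym (N2 s) (N1 s)) in E2.
  rewrite (h_sym (N3 s) (T s)), (h_sym (N3 s) (N1 s)), (h_sym (N3 s) (N2 s)) in E3.
  rewrite HT, HN1, HN2, HN3, oT1, oT2, oT3, o12, o13, o23 in *.
  destruct HeT as [-> | ->]; destruct HeN1 as [-> | ->];
    destruct Hen1 as [-> | ->]; destruct Hen2 as [-> | ->]; lra.
Qed.

Definition rect_system (lam mu nu : R -> R) (s : R) : Prop :=
  Derive lam s = 1 /\ lam s * (eN1 * kappa s) - mu s * (et * k s) = 0 /\
  Derive mu s - nu s * (en2 * rho s) = 0 /\ mu s * (en1 * rho s) + Derive nu s = 0.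

Lemma rect_comb_tangent_iff (lam mu nu : R -> R) s : I s ->
  ex_derive lam s -> ex_derive mu s -> ex_derive nu s ->
  is_qderive (rect_comb lam mu nu) s (T s) <-> rect_system lam mu nu s.
Proof.
  intros Hs Hl Hm Hn; pose proof (is_qderive_rect_comb lam mu nu s Hs Hl Hm Hn) as D.
  split.
  - intro DT; exact (frame_comb_eq_T _ _ _ _ s Hs (is_qderive_unique _ _ _ _ D DT)).
  - intros (E1 & E2 & E3 & E4); rewrite E1, E2, E3, E4, qcomb4_1000 in D; exact D.
Qed.

Definition rect_mu (c u : R) : R := et * eN1 * (kappa u * (u + c) / k u).

Definition rect_F (c u : R) : R :=
  (kappa u * k u + (u + c) * (Derive kappa u * k u - kappa u * Derive k u))
    / (k u ^ 2 * rho u).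

Definition rect_nu (c u : R) : R := en2 * et * eN1 * rect_F c u.

Lemma is_derive_rect_mu c s : I s ->
  is_derive (rect_mu c) s (et * eN1 * (rho s * rect_F c s)).
Proof.
  intro Hs; destruct Hsf as (_ & _ & _ & _ & _ & Sk & Sk2 & _).
  destruct (smooth_on_ex_derive2 I kappa s Sk Hs) as [Dk _].
  destruct (smooth_on_ex_derive2 I k s Sk2 Hs) as [Dk2 _].
  destruct (Hnz s Hs) as (_ & Hk & Hr).
  unfold rect_mu, rect_F; auto_derive.
  - auto.
  - change (fun x => kappa x) with kappa; change (fun x => k x) with k.
    field; auto.
Qed.

Lemma ex_derive_rect_F c s : I s -> ex_derive (rect_F c) s.
Proof.
  intro Hs; destruct Hsf as (_ & _ & _ & _ & _ & Sk & Sk2 & Sr & _).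
  destruct (smooth_on_ex_derive2 I kappa s Sk Hs) as [Dk DDk].
  destruct (smooth_on_ex_derive2 I k s Sk2 Hs) as [Dk2 DDk2].
  destruct (smooth_on_ex_derive2 I r s Sr Hs) as [Dr _].
  destruct (Hnz s Hs) as (_ & Hk & Hr).
  unfold rect_F, bitorsion in *; auto_derive; repeat split; auto.
  repeat apply Rmult_integral_contrapositive_currified; auto; lra.
Qed.

Lemma rect_system_canonical_iff c s : I s ->
  rect_system (fun u => u + c) (rect_mu c) (rect_nu c) s <->
  rect_mu c s * (en1 * rho s) + Derive (rect_nu c) s = 0.
Proof.
  intro Hs; destruct Hsf as (_ & _ & Het & _ & Hen2 & _).
  destruct (Hnz s Hs) as (_ & Hk & _).
  assert (Dlam : Derive (fun u => u + c) s = 1)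
    by (apply is_derive_unique; auto_derive; auto; ring).
  unfold rect_system; rewrite Dlam, (is_derive_unique _ _ _ (is_derive_rect_mu c s Hs)).
  split; [intros (_ & _ & _ & E) | intro E]; [exact E |].
  split; [reflexivity | split; [| split; [| exact E]]]; unfold rect_mu, rect_nu.
  - destruct Het as [-> | ->]; field; auto.
  - destruct Hen2 as [-> | ->]; ring.
Qed.

Lemma rect_system_solution (lam mu nu : R -> R) c s0 : I s0 -> lam s0 = s0 + c ->
  (forall s, I s -> ex_derive lam s) -> (forall s, I s -> rect_system lam mu nu s) ->
  forall s, I s -> lam s = s + c /\ mu s = rect_mu c s /\ nu s = rect_nu c s.
Proof.
  intros Hs0 Hc Hlam Hsys.
  destruct Hsf as (_ & _ & Het & _ & Hen2 & _).
  assert (Elam : forall s, I s -> lam s = s + c).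
  { intros s Hs.
    assert (Dlam : forall t, I t -> is_derive lam t 1).
    { intros t Ht; destruct (Hsys t Ht) as (E & _); rewrite <- E.
      exact (Derive_correct _ _ (Hlam t Ht)). }
    pose proof (same_derive_on_interval I (fun u => u) lam (fun _ => 1) HIi
                  (fun t _ => is_derive_id t) Dlam s s0 Hs Hs0); lra. }
  assert (Emu : forall s, I s -> mu s = rect_mu c s).
  { intros s Hs; destruct (Hsys s Hs) as (_ & E & _); destruct (Hnz s Hs) as (_ & Hk & _).
    rewrite Elam in E by exact Hs; unfold rect_mu.
    apply (Rmult_eq_reg_r (et * k s)).
    - destruct Het as [-> | ->]; field_simplify; auto; lra.
    - apply Rmult_integral_contrapositive_currified; [apply sign_neq0 |]; auto. }
  intros s Hs; split; [| split]; auto.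
  destruct (Hsys s Hs) as (_ & _ & E & _); destruct (Hnz s Hs) as (_ & _ & Hr).
  rewrite (Derive_ext_on_open I mu (rect_mu c) s HIo Hs Emu),
    (is_derive_unique _ _ _ (is_derive_rect_mu c s Hs)) in E.
  unfold rect_nu; apply (Rmult_eq_reg_r (en2 * rho s)).
  - destruct Hen2 as [-> | ->]; lra.
  - apply Rmult_integral_contrapositive_currified; [apply sign_neq0 |]; auto.
Qed.

Lemma rect_system_condition (lam mu nu : R -> R) :
  (forall s, I s -> ex_derive lam s) -> (forall s, I s -> rect_system lam mu nu s) ->
  exists c, forall s, I s -> rect_mu c s * (en1 * rho s) + Derive (rect_nu c) s = 0.
Proof.
  intros Hlam Hsys.
  destruct (classic (exists s0, I s0)) as [[s0 Hs0] | Hempty].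
  2: { exists 0; intros s Hs; exfalso; eauto. }
  exists (lam s0 - s0); intros s Hs.
  pose proof (rect_system_solution lam mu nu (lam s0 - s0) s0 Hs0 ltac:(ring) Hlam Hsys)
    as Sol.
  destruct (Sol s Hs) as (_ & Emu & _); destruct (Hsys s Hs) as (_ & _ & _ & E).
  rewrite <- Emu, <- (Derive_ext_on_open I nu _ s HIo Hs (fun t Ht => proj2 (proj2 (Sol t Ht)))).
  exact E.
Qed.

Lemma rect_canonical_ex_derive c s : I s ->
  ex_derive (fun u => u + c) s /\ ex_derive (rect_mu c) s /\ ex_derive (rect_nu c) s.
Proof.
  intro Hs; split; [auto_derive; auto | split].
  - eexists; exact (is_derive_rect_mu c s Hs).
  - unfold rect_nu; apply ex_derive_scal, ex_derive_rect_F, Hs.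
Qed.

Lemma rectifying_criterion :
  congruent_to_rectifying I beta T N2 N3 <->
  exists c, forall s, I s -> rect_mu c s * (en1 * rho s) + Derive (rect_nu c) s = 0.
Proof.
  split.
  - intros [m [lam [mu [nu Hrec]]]].
    apply (rect_system_condition lam mu nu); [intros s Hs; apply (Hrec s Hs) |].
    intros s Hs; destruct (Hrec s Hs) as (Hl & Hm & Hn & _).
    apply rect_comb_tangent_iff; auto.
    apply (is_qderive_ext_on I (fun u => qadd (beta u) m)); auto.
    + intros t Ht; apply (Hrec t Ht).
    + apply is_qderive_qadd_const, beta_tangent, Hs.
  - intros [c Hc].
    destruct (same_qderive_on_interval I beta
                (rect_comb (fun u => u + c) (rect_mu c) (rect_nu c)) T HIi beta_tangent)
      as [m Hm].
    + intros s Hs; destruct (rect_canonical_ex_derive c s Hs) as (Hl & Hmu & Hnu).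
      apply rect_comb_tangent_iff, rect_system_canonical_iff; auto.
    + exists m, (fun u => u + c), (rect_mu c), (rect_nu c); intros s Hs.
      destruct (rect_canonical_ex_derive c s Hs) as (Hl & Hmu & Hnu); auto.
Qed.

Lemma rect_condition_eq c s :
  rect_mu c s * (en1 * rho s) + Derive (rect_nu c) s =
  et * en1 * eN1 * (kappa s * rho s * (s + c) / k s) + et * en2 * eN1 * Derive (rect_F c) s.
Proof. unfold rect_mu, rect_nu; rewrite Derive_scal; unfold Rdiv; ring. Qed.


End RectifyingCriterion.

Theorem theorem4p2
  (I : R -> Prop) (HIo : open I) (HIi : is_interval I)
  (beta T N1 N2 N3 : R -> quat) (kappa k r : R -> R)
  (eT eN1 et en1 en2 : R)
  (Hsf : serret_frenet I beta T N1 N2 N3 kappa k r eT eN1 et en1 en2)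
  (Hnz : forall s, I s ->
     kappa s <> 0 /\ k s <> 0 /\ bitorsion et eT eN1 kappa r s <> 0) :
  congruent_to_rectifying I beta T N2 N3 <->
  exists c : R, forall s, I s ->
    et * en1 * eN1 *
      (kappa s * bitorsion et eT eN1 kappa r s * (s + c) / k s)
    + et * en2 * eN1 *
      Derive (fun u =>
        (kappa u * k u + (u + c) * (Derive kappa u * k u - kappa u * Derive k u))
        / (k u ^ 2 * bitorsion et eT eN1 kappa r u)) s
    = 0.
Proof.
  rewrite (rectifying_criterion I beta T N1 N2 N3 kappa k r eT eN1 et en1 en2 HIo HIi Hsf Hnz).
  setoid_rewrite rect_condition_eq; reflexivity.
Qed.
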